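(* Let $x_0>0$ and $v_0>0$. For each $\alpha\in[-\pi,\pi]$, consider the closed curve $$E_\alpha:\quad x = x_0 \cos t + v_0 \cos \alpha \,\sin t,\qquad y = v_0 \sin \alpha\, \sin t,\qquad 0 \le t \le 2\pi,$$ which is the trajectory of the planar free harmonic oscillator $x''+x=0,\ y''+y=0$ with initial position $(x_0,0)$ and initial velocity $(v_0\cos\alpha, v_0\sin\alpha)$. It is an ellipse centered at the origin, or a segment when $\sin\alpha=0$. Then, as $\alpha$ ranges over $[-\pi,\pi]$, the foci of the curves $E_\alpha$ trace the Cassini oval with Cartesian equation $$[(x + x_0)^2 + y^2]\,[(x - x_0)^2 + y^2] = v_0^4,$$ equivalently $$(x^2 + y^2)^2 - 2x_0^2(x^2 - y^2) = v_0^4 - x_0^4,$$ and polar equation $$r^4 - 2x_0^2 r^2 \cos 2\theta = v_0^4 - x_0^4 .$$ This Cassini oval lies symmetrically inside the ellipse of safety $$\frac{x^2}{x_0^2+v_0^2}+\frac{y^2}{v_0^2}=1 .$$ In particular, when $x_0 = v_0$ the locus of the foci is Bernoulli's lemniscate, with Cartesian equation $$(x^2 + y^2)^2 = 2x_0^2(x^2 - y^2)$$ and polar equation $$r^2 = 2x_0^2 \cos 2\theta,\qquad -\tfrac{\pi}{4}\le\theta\le\tfrac{\pi}{4}.$$ Moreover, in this case $\alpha = 2\theta$, where $\theta$ is the polar angle of the focus, so the lemniscate is given by $$r^2 = 2x_0^2\cos\alpha,\qquad -\tfrac{\pi}{2}\le\alpha\le\tfrac{\pi}{2}.$$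
   Context: The ellipse of safety is the envelope of the family of curves $E_\alpha$: its complement's exterior is the set of points not reached by any trajectory. When $\sin\alpha=0$ the curve $E_\alpha$ degenerates to the segment from $(-\sqrt{x_0^2+v_0^2},0)$ to $(\sqrt{x_0^2+v_0^2},0)$, and its foci are taken to be the endpoints of that segment. A Cassini oval with foci $(\pm\lambda,0)$ is the set of points whose distances to these two foci have constant product $\mu^2$. Polar coordinates are $x=r\cos\theta$, $y=r\sin\theta$. *)

From Stdlib Require Import Reals Lra.
Open Scope R_scope.

Definition dist2 (P Q : R * R) : R :=
  sqrt ((fst P - fst Q) ^ 2 + (snd P - snd Q) ^ 2).

Definition E (x0 v0 a : R) (P : R * R) : Prop :=
  exists t, 0 <= t <= 2 * PI /\
    P = (x0 * cos t + v0 * cos a * sin t, v0 * sin a * sin t).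

(* For a genuine ellipse this is the
   classical notion of focus; when s = dist F F' the locus is exactly the
   segment [F, F'], whose foci are then its endpoints (the paper's
   convention for the degenerate case sin a = 0). *)
Definition is_focus (C : R * R -> Prop) (F : R * R) : Prop :=
  exists (F' : R * R) (s : R), forall P, C P <-> dist2 P F + dist2 P F' = s.

Definition foci_locus (x0 v0 : R) (F : R * R) : Prop :=
  exists a, -PI <= a <= PI /\ is_focus (E x0 v0 a) F.

Definition cassini (x0 v0 : R) (P : R * R) : Prop :=
  ((fst P + x0) ^ 2 + snd P ^ 2) * ((fst P - x0) ^ 2 + snd P ^ 2) = v0 ^ 4.

From Stdlib Require Import Reals Lra Psatz.
From Coquelicot Require Import Complex.
Open Scope R_scope.

(* Identify the plane with C, so that E_alpha is t |-> x0 cos t + v0 e^{i alpha} sin t.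
   If F^2 = x0^2 + (v0 e^{i alpha})^2, write x0 = g^2 + h^2, v0 e^{i alpha} = i (g^2 - h^2)
   and F = 2 g h.  Then E_alpha = {g^2 w^2 + h^2 conj(w)^2 : |w| = 1} and
   P -+ F = (g w -+ h conj(w))^2, so by the parallelogram law
   |P - F| + |P + F| = 2 (|g|^2 + |h|^2); conversely every point with this focal sum has
   that form.  In the other direction, if E_alpha = {P : |P - F| + |P - F'| = d}, then |P - F| is an
   affine function k - m.P along E_alpha, and comparing coefficients in
   |P - F|^2 = (k - m.P)^2 along the curve forces F^2 = x0^2 + v0^2 e^{2 i alpha}.
   Finally (F - x0) (F + x0) = v0^2 e^{2 i alpha} is exactly the Cassini equation. *)

Lemma cos_sin_sq (t : R) : cos t ^ 2 + sin t ^ 2 = 1.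
Proof. rewrite <- (sin2_cos2 t); unfold Rsqr; ring. Qed.

Lemma unit_angle_upper (c s : R) : c ^ 2 + s ^ 2 = 1 -> 0 <= s ->
  exists t, 0 <= t <= PI /\ cos t = c /\ sin t = s.
Proof.
intros hcs hs.
assert (hc : -1 <= c <= 1) by nra.
exists (acos c); split; [apply acos_bound | split; [now apply cos_acos |]].
rewrite sin_acos by exact hc.
replace (1 - c²) with (s ^ 2) by (unfold Rsqr; lra).
now apply sqrt_pow2.
Qed.

Lemma unit_angle (c s : R) : c ^ 2 + s ^ 2 = 1 ->
  exists t, - PI <= t <= PI /\ cos t = c /\ sin t = s.
Proof.
intros hcs; pose proof PI_RGT_0.
destruct (Rle_lt_dec 0 s) as [hs | hs].
- destruct (unit_angle_upper c s hcs hs) as [t [ht hct]].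
  exists t; split; [lra | exact hct].
- destruct (unit_angle_upper c (- s)) as [t [ht [hc hs']]]; [nra | lra |].
  exists (- t); rewrite cos_neg, sin_neg; repeat split; lra.
Qed.

Lemma unit_angle_2PI (c s : R) : c ^ 2 + s ^ 2 = 1 ->
  exists t, 0 <= t <= 2 * PI /\ cos t = c /\ sin t = s.
Proof.
intros hcs.
destruct (unit_angle (- c) (- s)) as [t [ht [hc hs]]]; [nra |].
exists (t + PI); rewrite cos_plus, sin_plus, cos_PI, sin_PI; repeat split; lra.
Qed.

Lemma E_unit_circle (x0 v0 a : R) (P : R * R) :
  E x0 v0 a P <-> exists c s, c ^ 2 + s ^ 2 = 1 /\
                   P = (x0 * c + v0 * cos a * s, v0 * sin a * s).
Proof.
split.
- intros [t [_ ->]]; exists (cos t), (sin t); split; [apply cos_sin_sq | reflexivity].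
- intros [c [s [hcs ->]]].
  destruct (unit_angle_2PI c s hcs) as [t [ht [<- <-]]].
  now exists t.
Qed.

Definition expi (t : R) : C := (cos t, sin t).

Lemma expi_add (t u : R) : (expi t * expi u)%C = expi (t + u).
Proof.
unfold expi, Cmult; simpl; rewrite cos_plus, sin_plus; f_equal; ring.
Qed.

Lemma Cmod_sqr (w : C) : Cmod (w * w) = Cmod w ^ 2.
Proof. rewrite Cmod_mult; ring. Qed.

Lemma Cmod_parallelogram (u v : C) :
  Cmod (u - v) ^ 2 + Cmod (u + v) ^ 2 = 2 * (Cmod u ^ 2 + Cmod v ^ 2).
Proof. rewrite !Cmod2_alt; destruct u, v; simpl; ring. Qed.

Lemma Csqrt_exists (z : C) : exists w : C, (w * w)%C = z.
Proof.
destruct z as [a b].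
set (m := sqrt (a ^ 2 + b ^ 2)).
assert (hm : m * m = a ^ 2 + b ^ 2) by (apply sqrt_sqrt; nra).
assert (hm0 : 0 <= m) by apply sqrt_pos.
assert (hma : - m <= a <= m) by (split; nra).
set (x := sqrt ((m + a) / 2)); set (y := sqrt ((m - a) / 2)).
assert (hx : x * x = (m + a) / 2) by (apply sqrt_sqrt; lra).
assert (hy : y * y = (m - a) / 2) by (apply sqrt_sqrt; lra).
assert (hxy0 : 0 <= x * y) by (apply Rmult_le_pos; apply sqrt_pos).
assert (hxy : (2 * (x * y)) ^ 2 = b ^ 2).
{ replace ((2 * (x * y)) ^ 2) with (4 * (x * x) * (y * y)) by ring; rewrite hx, hy; nra. }
destruct (Rle_lt_dec 0 b) as [hb | hb]; [exists (x, y) | exists (x, - y)];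
  apply injective_projections; simpl; nra.
Qed.

Lemma Csqr_eq (w v : C) : (w * w = v * v)%C -> w = v \/ w = (- v)%C.
Proof.
intros h; destruct (Ceq_dec w v) as [e | e]; [now left | right].
assert (hwv : (w - v)%C <> 0%R) by (intro e'; apply e; rewrite <- (Cplus_0_l v), <- e'; ring).
transitivity (/ (w - v) * ((w * w - v * v) - (w - v) * v))%C; [field; exact hwv |].
rewrite h; field; exact hwv.
Qed.

Lemma Cmod_eq_unit_mult (y h : C) : Cmod y = Cmod h -> exists v, Cmod v = 1 /\ y = (h * v)%C.
Proof.
intros hyh; destruct (Ceq_dec h 0) as [e | e].
- exists 1%R; split; [apply Cmod_1 |].
  rewrite e, Cmod_0 in hyh; rewrite (Cmod_eq_0 y hyh), e; ring.
- exists (y / h)%C; split.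
  + rewrite Cmod_div by exact e; rewrite hyh; field; now apply Cmod_gt_0 in e; lra.
  + field; exact e.
Qed.

Lemma Cmult_unit_conj (v : C) : Cmod v = 1 -> (v * Cconj v)%C = 1%R.
Proof. intros hv; rewrite <- Cmod2_conj, hv; apply injective_projections; simpl; ring. Qed.

Lemma sum_prod_sq_cases (x y a b : R) : 0 <= x -> 0 <= y -> 0 <= a -> 0 <= b ->
  x ^ 2 + y ^ 2 = a ^ 2 + b ^ 2 -> x * y = a * b ->
  (x = a /\ y = b) \/ (x = b /\ y = a).
Proof.
intros hx hy ha hb hs hp.
assert (h : (x ^ 2 - a ^ 2) * (x ^ 2 - b ^ 2) = 0).
{ transitivity (x ^ 2 * (x ^ 2 - (a ^ 2 + b ^ 2)) + (a * b) ^ 2); [ring |].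
  rewrite <- hs, <- hp; ring. }
apply Rmult_integral in h; destruct h; [left | right]; split; nra.
Qed.

Lemma sqr_sum_unit_form (g h X Y : C) :
  (X * Y = g * h)%C -> Cmod X = Cmod g -> Cmod Y = Cmod h ->
  exists u, Cmod u = 1 /\ (X * X + Y * Y = g * g * u + h * h * Cconj u)%C.
Proof.
intros hXY hX hY.
destruct (Cmod_eq_unit_mult X g hX) as [v1 [hv1 ->]].
destruct (Cmod_eq_unit_mult Y h hY) as [v2 [hv2 ->]].
assert (hsq : forall v, Cmod v = 1 -> Cmod (v * v) = 1)
  by (intros v hv; rewrite Cmod_sqr, hv; ring).
destruct (Ceq_dec g 0) as [-> | hg].
- exists (Cconj (v2 * v2)); split; [rewrite Cmod_conj; auto |].
  rewrite Cconj_conj; ring.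
- destruct (Ceq_dec h 0) as [-> | hh].
  + exists (v1 * v1)%C; split; [auto | ring].
  + assert (hv12 : (v1 * v2)%C = 1%R).
    { transitivity (/ (g * h) * ((g * v1) * (h * v2)))%C; [field; auto |].
      rewrite hXY; field; auto. }
    assert (hv2c : v2 = Cconj v1).
    { rewrite <- (Cmult_1_l v2), <- (Cmult_unit_conj v1 hv1).
      transitivity (Cconj v1 * (v1 * v2))%C; [ring |]. rewrite hv12; ring. }
    exists (v1 * v1)%C; split; [auto |].
    rewrite hv2c, Cmult_conj; ring.
Qed.

Lemma conjugate_square_roots (A B F : C) : (F * F = A * A + B * B)%C ->
  exists g h : C, (g * g + h * h = A)%C /\ (RtoC 2 * g * h = F)%C /\
                  (Ci * (g * g - h * h) = B)%C.
Proof.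
intros hF.
destruct (Csqrt_exists (A + F)%C) as [G hG].
destruct (Csqrt_exists (A - F)%C) as [H0 hH0].
assert (hB : ((Ci * G * H0) * (Ci * G * H0) = B * B)%C).
{ transitivity (Ci * Ci * ((G * G) * (H0 * H0)))%C; [ring |].
  rewrite hG, hH0; replace (Ci * Ci)%C with (- RtoC 1)%C
    by (apply injective_projections; simpl; ring).
  transitivity (F * F - A * A)%C; [ring |]. rewrite hF; ring. }
(* choosing the sign of the square root of A - F makes i G H equal to B *)
assert (hH : exists H, (H * H = A - F)%C /\ (Ci * G * H = B)%C).
{ destruct (Csqr_eq _ _ hB) as [e | e]; [exists H0 | exists (- H0)%C];
    split; try (rewrite <- hH0; ring); auto.
  transitivity (- (Ci * G * H0))%C; [ring |]. rewrite e; ring. }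
destruct hH as [H [hH hGH]].
exists ((G + H) / RtoC 2)%C, ((G - H) / RtoC 2)%C; repeat split.
- transitivity ((G * G + H * H) / RtoC 2)%C; [field |].
  rewrite hG, hH; field.
- transitivity ((G * G - H * H) / RtoC 2)%C; [field |].
  rewrite hG, hH; field.
- rewrite <- hGH; field.
Qed.

Lemma ellipse_focal_sum (g h P : C) :
  (exists u, Cmod u = 1 /\ P = (g * g * u + h * h * Cconj u)%C) <->
  Cmod (P - RtoC 2 * g * h) + Cmod (P + RtoC 2 * g * h) = 2 * (Cmod g ^ 2 + Cmod h ^ 2).
Proof.
split.
- intros [u [hu ->]].
  destruct (Csqrt_exists u) as [w <-].
  assert (hw : Cmod w = 1).
  { rewrite Cmod_sqr in hu; pose proof (Cmod_ge_0 w); nra. }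
  pose proof (Cmult_unit_conj w hw) as hww.
  replace (g * g * (w * w) + h * h * Cconj (w * w) - RtoC 2 * g * h)%C
    with ((g * w - h * Cconj w) * (g * w - h * Cconj w))%C
    by (rewrite Cmult_conj, <- (Cmult_1_r (RtoC 2 * g * h)), <- hww; ring).
  replace (g * g * (w * w) + h * h * Cconj (w * w) + RtoC 2 * g * h)%C
    with ((g * w + h * Cconj w) * (g * w + h * Cconj w))%C
    by (rewrite Cmult_conj, <- (Cmult_1_r (RtoC 2 * g * h)), <- hww; ring).
  rewrite !Cmod_sqr, Cmod_parallelogram, !Cmod_mult, Cmod_conj, hw; ring.
- intros hsum.
  destruct (Csqrt_exists (P - RtoC 2 * g * h)%C) as [U hU].
  destruct (Csqrt_exists (P + RtoC 2 * g * h)%C) as [V hV].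
  assert (h2 : RtoC 2 <> RtoC 0) by (intros e; apply (f_equal fst) in e; simpl in e; lra).
  set (X := ((U + V) / RtoC 2)%C); set (Y := ((V - U) / RtoC 2)%C).
  assert (hP : (X * X + Y * Y = P)%C).
  { transitivity ((U * U + V * V) / RtoC 2)%C; [unfold X, Y; field; exact h2 |].
    rewrite hU, hV; field; exact h2. }
  assert (hXY : (X * Y = g * h)%C).
  { transitivity ((V * V - U * U) / (RtoC 2 * RtoC 2))%C; [unfold X, Y; field; exact h2 |].
    rewrite hU, hV; field; exact h2. }
  assert (hsq : Cmod X ^ 2 + Cmod Y ^ 2 = Cmod g ^ 2 + Cmod h ^ 2).
  { unfold X, Y; rewrite !Cmod_div, Cmod_R, Rabs_pos_eq by (auto; lra).
    replace (U + V)%C with (V + U)%C by ring.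
    replace ((Cmod (V + U) / 2) ^ 2 + (Cmod (V - U) / 2) ^ 2)
      with ((Cmod (V - U) ^ 2 + Cmod (V + U) ^ 2) / 4) by field.
    rewrite Cmod_parallelogram, <- (Cmod_sqr U), <- (Cmod_sqr V), hU, hV; lra. }
  assert (hprod : Cmod X * Cmod Y = Cmod g * Cmod h) by (rewrite <- !Cmod_mult, hXY; reflexivity).
  destruct (sum_prod_sq_cases _ _ _ _ (Cmod_ge_0 X) (Cmod_ge_0 Y) (Cmod_ge_0 g) (Cmod_ge_0 h)
              hsq hprod) as [[hX hY] | [hX hY]].
  + destruct (sqr_sum_unit_form g h X Y hXY hX hY) as [u [hu e]].
    exists u; split; [exact hu | rewrite <- e; auto].
  + destruct (sqr_sum_unit_form g h Y X ltac:(rewrite <- hXY; ring) hY hX) as [u [hu e]].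
    exists u; split; [exact hu | rewrite <- e, <- hP; ring].
Qed.

Definition focus_sq (x0 v0 a : R) : C := (RtoC (x0 ^ 2) + RtoC (v0 ^ 2) * expi (2 * a))%C.

Lemma E_conjugate_form (x0 v0 a : R) (g h : C) :
  (g * g + h * h = x0)%C -> (Ci * (g * g - h * h) = v0 * expi a)%C ->
  forall P, E x0 v0 a P <-> exists u, Cmod u = 1 /\ P = (g * g * u + h * h * Cconj u)%C.
Proof.
intros hx hv P.
assert (hpt : forall c s, ((x0 * c + v0 * cos a * s, v0 * sin a * s) : C)
                          = (g * g * (c, s) + h * h * Cconj (c, s))%C).
{ intros c s.
  transitivity ((g * g + h * h) * RtoC c + Ci * (g * g - h * h) * RtoC s)%C.
  - rewrite hx, hv; apply injective_projections; simpl; ring.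
  - apply injective_projections; simpl; ring. }
rewrite E_unit_circle; split.
- intros [c [s [hcs ->]]]; exists (c, s); split; [| apply hpt].
  unfold Cmod; cbn [fst snd]; rewrite hcs; apply sqrt_1.
- intros [[c s] [hu ->]]; exists c, s; split; [| symmetry; apply hpt].
  transitivity (Cmod (c, s) ^ 2); [now rewrite Cmod2_alt | rewrite hu; ring].
Qed.

Lemma is_focus_of_sq (x0 v0 a : R) (F : C) :
  (F * F = focus_sq x0 v0 a)%C -> is_focus (E x0 v0 a) F.
Proof.
intros hF.
destruct (conjugate_square_roots x0 (v0 * expi a) F) as [g [h [hx [hgh hv]]]].
{ rewrite hF; unfold focus_sq; replace (2 * a) with (a + a) by ring.
  rewrite <- expi_add; apply injective_projections; simpl; ring. }
exists (- F)%C, (2 * (Cmod g ^ 2 + Cmod h ^ 2)); intros P.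
rewrite (E_conjugate_form x0 v0 a g h hx hv), ellipse_focal_sum, hgh.
replace (P + F)%C with (P - - F)%C by ring; reflexivity.
Qed.

Lemma cassini_sq_form (x0 v0 p q : R) :
  cassini x0 v0 (p, q) <-> (p ^ 2 - q ^ 2 - x0 ^ 2) ^ 2 + (2 * p * q) ^ 2 = v0 ^ 4.
Proof.
unfold cassini; cbn [fst snd].
replace (((p + x0) ^ 2 + q ^ 2) * ((p - x0) ^ 2 + q ^ 2))
  with ((p ^ 2 - q ^ 2 - x0 ^ 2) ^ 2 + (2 * p * q) ^ 2) by ring.
reflexivity.
Qed.

Lemma cassini_of_sq (x0 v0 a : R) (F : C) :
  (F * F = focus_sq x0 v0 a)%C -> cassini x0 v0 F.
Proof.
destruct F as [p q]; intros hF.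
apply (f_equal fst) in hF as hre; apply (f_equal snd) in hF as him.
unfold focus_sq, expi in hre, him; simpl in hre, him.
apply cassini_sq_form.
replace (p ^ 2 - q ^ 2 - x0 ^ 2) with (v0 ^ 2 * cos (2 * a)) by lra.
replace (2 * p * q) with (v0 ^ 2 * sin (2 * a)) by lra.
rewrite <- (Rmult_1_r (v0 ^ 4)), <- (cos_sin_sq (2 * a)); ring.
Qed.

Lemma sq_of_cassini (x0 v0 : R) (F : C) : 0 < v0 -> cassini x0 v0 F ->
  exists a, - (PI / 2) <= a <= PI / 2 /\ (F * F = focus_sq x0 v0 a)%C.
Proof.
destruct F as [p q]; intros hv hc; apply cassini_sq_form in hc.
assert (hv2 : 0 < v0 ^ 2) by nra.
destruct (unit_angle ((p ^ 2 - q ^ 2 - x0 ^ 2) / v0 ^ 2) (2 * p * q / v0 ^ 2))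
  as [t [ht [hcos hsin]]].
{ replace (((p ^ 2 - q ^ 2 - x0 ^ 2) / v0 ^ 2) ^ 2 + (2 * p * q / v0 ^ 2) ^ 2)
    with (((p ^ 2 - q ^ 2 - x0 ^ 2) ^ 2 + (2 * p * q) ^ 2) / (v0 ^ 2) ^ 2) by (field; lra).
  rewrite hc; field; lra. }
exists (t / 2); split; [lra |].
unfold focus_sq, expi; replace (2 * (t / 2)) with t by field; rewrite hcos, hsin.
apply injective_projections; simpl; field; lra.
Qed.

Lemma quadratic_vanishing_on_circle (A B C D1 D2 K : R) :
  (forall c s, c ^ 2 + s ^ 2 = 1 ->
     A * c ^ 2 + 2 * B * c * s + C * s ^ 2 + D1 * c + D2 * s + K = 0) ->
  A + K = 0 /\ C + K = 0 /\ B = 0 /\ D1 = 0 /\ D2 = 0.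
Proof.
intros h.
pose proof (h 1 0 ltac:(lra)); pose proof (h (-1) 0 ltac:(lra)).
pose proof (h 0 1 ltac:(lra)); pose proof (h 0 (-1) ltac:(lra)).
pose proof (h (3/5) (4/5) ltac:(lra)).
lra.
Qed.

Lemma dist2_comm (P Q : R * R) : dist2 P Q = dist2 Q P.
Proof. unfold dist2; f_equal; ring. Qed.

Lemma dist2_nonneg (P Q : R * R) : 0 <= dist2 P Q.
Proof. apply sqrt_pos. Qed.

Lemma dist2_sq (P Q : R * R) : dist2 P Q ^ 2 = (fst P - fst Q) ^ 2 + (snd P - snd Q) ^ 2.
Proof. apply pow2_sqrt, Rplus_le_le_0_compat; apply pow2_ge_0. Qed.

Lemma dist2_triangle (P F F' : R * R) : dist2 F F' <= dist2 P F + dist2 P F'.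
Proof.
change (Cmod (F - F') <= Cmod (P - F) + Cmod (P - F')).
rewrite <- (Cmod_opp (P - F)); replace (F - F')%C with (- (P - F) + (P - F'))%C by ring.
apply Cmod_triangle.
Qed.

Lemma focal_distance_affine (x y p q p' q' d : R) : 0 < d ->
  dist2 (x, y) (p, q) + dist2 (x, y) (p', q') = d ->
  dist2 (x, y) (p, q) = (d ^ 2 + p ^ 2 + q ^ 2 - p' ^ 2 - q' ^ 2) / (2 * d)
                        - (p - p') / d * x - (q - q') / d * y.
Proof.
intros hd hsum.
pose proof (dist2_sq (x, y) (p, q)) as hu; pose proof (dist2_sq (x, y) (p', q')) as hu'.
cbn [fst snd] in hu, hu'.
set (u := dist2 (x, y) (p, q)) in *; set (u' := dist2 (x, y) (p', q')) in *.
(* u' = d - u, so u' ^ 2 - u ^ 2 = d ^ 2 - 2 d u is affine in (x, y) *)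
apply Rmult_eq_reg_r with (2 * d); [| lra].
replace (u * (2 * d)) with (d ^ 2 + u ^ 2 - (d - u) ^ 2) by ring.
replace (d - u) with u' by lra; rewrite hu, hu'; field; lra.
Qed.

(* With a = (x0, 0), b = v0 (ca, sa) and the quadratic form M = I - m m^T, the
   hypotheses say M(a, a) = M(b, b) = k^2 (1 - |m|^2) and M(a, b) = 0; the
   conclusion is (k m)^2 = a^2 + b^2 in complex notation. *)
Lemma foci_from_conjugate_diameters (x0 v0 ca sa k m1 m2 : R) :
  0 < x0 -> 0 < v0 -> ca ^ 2 + sa ^ 2 = 1 -> sa <> 0 -> m1 ^ 2 + m2 ^ 2 <= 1 ->
  x0 ^ 2 * (1 - m1 ^ 2) = k ^ 2 * (1 - m1 ^ 2 - m2 ^ 2) ->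
  v0 ^ 2 * (1 - (m1 * ca + m2 * sa) ^ 2) = k ^ 2 * (1 - m1 ^ 2 - m2 ^ 2) ->
  ca * (1 - m1 ^ 2) = m1 * m2 * sa ->
  (k * m1) ^ 2 - (k * m2) ^ 2 = x0 ^ 2 + v0 ^ 2 * (ca ^ 2 - sa ^ 2) /\
  2 * (k * m1) * (k * m2) = v0 ^ 2 * (2 * sa * ca).
Proof.
intros hx hv hcs hsa hm h1 h2 h3.
assert (hsa2 : 0 < sa ^ 2) by (rewrite <- Rsqr_pow2; now apply Rsqr_pos_lt).
assert (hN1 : 0 < 1 - m1 ^ 2).
{ destruct (Rle_lt_or_eq_dec 0 (1 - m1 ^ 2)) as [| e]; [nra | assumption |].
  assert (m2 = 0) by nra; subst m2.
  assert (hb0 : v0 ^ 2 * sa ^ 2 = 0).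
  { replace (sa ^ 2) with (1 - (m1 * ca + 0 * sa) ^ 2) by nra.
    rewrite h2, <- e; ring. }
  assert (0 < v0 ^ 2 * sa ^ 2) by (apply Rmult_lt_0_compat; nra).
  lra. }
assert (hN : 0 < 1 - m1 ^ 2 - m2 ^ 2).
{ assert (0 < k ^ 2 * (1 - m1 ^ 2 - m2 ^ 2))
    by (rewrite <- h1; apply Rmult_lt_0_compat; nra).
  pose proof (pow2_ge_0 k); nra. }
assert (hlin : (m1 * ca + m2 * sa) * (1 - m1 ^ 2) = m2 * sa).
{ transitivity (m1 * (ca * (1 - m1 ^ 2)) + m2 * sa * (1 - m1 ^ 2)); [ring |].
  rewrite h3; ring. }
assert (hnorm : sa ^ 2 * (m1 ^ 2 * m2 ^ 2 + (1 - m1 ^ 2) ^ 2) = (1 - m1 ^ 2) ^ 2).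
{ transitivity ((m1 * m2 * sa) ^ 2 + sa ^ 2 * (1 - m1 ^ 2) ^ 2); [ring |].
  rewrite <- h3; transitivity ((ca ^ 2 + sa ^ 2) * (1 - m1 ^ 2) ^ 2); [ring |].
  rewrite hcs; ring. }
assert (hb : v0 ^ 2 * sa ^ 2 = k ^ 2 * (1 - m1 ^ 2)).
{ apply Rmult_eq_reg_r with ((1 - m1 ^ 2) * (1 - m1 ^ 2 - m2 ^ 2)); [| nra].
  transitivity (v0 ^ 2 * (1 - (m1 * ca + m2 * sa) ^ 2) * (1 - m1 ^ 2) ^ 2).
  - transitivity (v0 ^ 2 * ((1 - m1 ^ 2) ^ 2 - ((m1 * ca + m2 * sa) * (1 - m1 ^ 2)) ^ 2));
      [rewrite hlin, <- hnorm; ring | ring].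
  - rewrite h2; ring. }
split.
- apply Rmult_eq_reg_r with ((1 - m1 ^ 2) ^ 2); [| nra].
  transitivity (k ^ 2 * (m1 ^ 2 - m2 ^ 2) * (1 - m1 ^ 2) ^ 2); [ring |].
  transitivity (x0 ^ 2 * (1 - m1 ^ 2) * (1 - m1 ^ 2) + v0 ^ 2 * (ca * (1 - m1 ^ 2)) ^ 2
                - v0 ^ 2 * sa ^ 2 * (1 - m1 ^ 2) ^ 2); [| ring].
  rewrite h1, h3; replace (v0 ^ 2 * (m1 * m2 * sa) ^ 2) with (v0 ^ 2 * sa ^ 2 * (m1 ^ 2 * m2 ^ 2))
    by ring.
  rewrite hb; ring.
- apply Rmult_eq_reg_r with (1 - m1 ^ 2); [| lra].
  transitivity (2 * v0 ^ 2 * sa * (ca * (1 - m1 ^ 2))); [| ring].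
  rewrite h3; replace (2 * v0 ^ 2 * sa * (m1 * m2 * sa)) with (2 * m1 * m2 * (v0 ^ 2 * sa ^ 2))
    by ring.
  rewrite hb; ring.
Qed.

Lemma E_segment_endpoint (x0 v0 a e : R) : 0 < x0 -> sin a = 0 -> e ^ 2 = 1 ->
  E x0 v0 a (e * sqrt (x0 ^ 2 + v0 ^ 2), 0).
Proof.
intros hx hs he.
assert (hc1 : cos a ^ 2 = 1) by (rewrite <- (cos_sin_sq a), hs; ring).
set (r := sqrt (x0 ^ 2 + v0 ^ 2)).
assert (hr : r ^ 2 = x0 ^ 2 + v0 ^ 2) by (apply pow2_sqrt; nra).
assert (hr0 : 0 < r) by (apply sqrt_lt_R0; nra).
apply E_unit_circle; exists (e * x0 / r), (e * v0 * cos a / r); split.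
- apply Rmult_eq_reg_r with (r ^ 2); [| nra].
  transitivity (e ^ 2 * (x0 ^ 2 + cos a ^ 2 * v0 ^ 2)); [field; lra |].
  rewrite he, hc1, hr; ring.
- rewrite hs; f_equal; [| ring].
  apply Rmult_eq_reg_r with r; [| lra].
  transitivity (e * (x0 ^ 2 + cos a ^ 2 * v0 ^ 2)); [| field; lra].
  replace (e * r * r) with (e * r ^ 2) by ring; rewrite hr, hc1; ring.
Qed.

Lemma E_segment_bound (x0 v0 a x y : R) : sin a = 0 -> E x0 v0 a (x, y) ->
  x ^ 2 <= x0 ^ 2 + v0 ^ 2.
Proof.
intros hs hE; apply E_unit_circle in hE; destruct hE as [c [s [hcs hxy]]].
injection hxy as -> _.
assert (hc1 : cos a ^ 2 = 1) by (rewrite <- (cos_sin_sq a), hs; ring).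
pose proof (pow2_ge_0 (x0 * s - v0 * cos a * c)).
replace (v0 ^ 2) with (v0 ^ 2 * cos a ^ 2) by (rewrite hc1; ring).
nra.
Qed.

Section Focus_of_E.

Variables (x0 v0 a p q p' q' d : R).
Hypotheses (hx0 : 0 < x0) (hv0 : 0 < v0).
Hypothesis hfocus : forall P, E x0 v0 a P <-> dist2 P (p, q) + dist2 P (p', q') = d.

Let k := (d ^ 2 + p ^ 2 + q ^ 2 - p' ^ 2 - q' ^ 2) / (2 * d).
Let m1 := (p - p') / d.
Let m2 := (q - q') / d.

Lemma focal_sum_on_curve (c s : R) : c ^ 2 + s ^ 2 = 1 ->
  dist2 (x0 * c + v0 * cos a * s, v0 * sin a * s) (p, q)
  + dist2 (x0 * c + v0 * cos a * s, v0 * sin a * s) (p', q') = d.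
Proof. intros hcs; apply hfocus, E_unit_circle; now exists c, s. Qed.

Lemma focal_sum_pos : 0 < d.
Proof.
pose proof (focal_sum_on_curve 1 0 ltac:(lra)) as hr.
pose proof (focal_sum_on_curve (-1) 0 ltac:(lra)) as hl.
replace (x0 * 1 + v0 * cos a * 0, v0 * sin a * 0) with (x0, 0) in hr by (f_equal; ring).
replace (x0 * -1 + v0 * cos a * 0, v0 * sin a * 0) with (- x0, 0) in hl by (f_equal; ring).
pose proof (dist2_triangle (p, q) (x0, 0) (- x0, 0)) as ht.
assert (e : dist2 (x0, 0) (- x0, 0) = 2 * x0).
{ unfold dist2; cbn [fst snd].
  replace ((x0 - - x0) ^ 2 + (0 - 0) ^ 2) with ((2 * x0) ^ 2) by ring.
  apply sqrt_pow2; lra. }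
rewrite e, (dist2_comm (p, q)), (dist2_comm (p, q)) in ht.
pose proof (dist2_nonneg (x0, 0) (p', q')); pose proof (dist2_nonneg (- x0, 0) (p', q')).
lra.
Qed.

Lemma E_focal_dist_affine (x y : R) : E x0 v0 a (x, y) ->
  dist2 (x, y) (p, q) = k - m1 * x - m2 * y.
Proof. intros hE; apply focal_distance_affine, hfocus; [apply focal_sum_pos | exact hE]. Qed.

Lemma focal_dir_le : m1 ^ 2 + m2 ^ 2 <= 1.
Proof.
pose proof focal_sum_pos as hd.
pose proof (focal_sum_on_curve 1 0 ltac:(lra)) as hsum.
pose proof (dist2_triangle (x0 * 1 + v0 * cos a * 0, v0 * sin a * 0) (p, q) (p', q')) as ht.
rewrite hsum in ht.
pose proof (dist2_sq (p, q) (p', q')) as e; cbn [fst snd] in e.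
pose proof (dist2_nonneg (p, q) (p', q')).
unfold m1, m2; replace (((p - p') / d) ^ 2 + ((q - q') / d) ^ 2)
  with (dist2 (p, q) (p', q') ^ 2 * / d ^ 2) by (rewrite e; field; lra).
rewrite <- (Rinv_r (d ^ 2)) by nra.
apply Rmult_le_compat_r; [apply Rlt_le, Rinv_0_lt_compat |]; nra.
Qed.

Lemma focal_conic_coeffs :
  p = k * m1 /\ (q - k * m2) * sin a = 0 /\
  x0 ^ 2 * (1 - m1 ^ 2) = k ^ 2 - p ^ 2 - q ^ 2 /\
  v0 ^ 2 * (1 - (m1 * cos a + m2 * sin a) ^ 2) = k ^ 2 - p ^ 2 - q ^ 2 /\
  cos a * (1 - m1 ^ 2) = m1 * m2 * sin a.
Proof.
(* on the curve, |P - F|^2 = (k - m.P)^2 is a quadratic relation in (cos t, sin t) *)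
destruct (quadratic_vanishing_on_circle
  (x0 ^ 2 * (1 - m1 ^ 2))
  (x0 * v0 * (cos a - m1 * (m1 * cos a + m2 * sin a)))
  (v0 ^ 2 * (cos a ^ 2 + sin a ^ 2 - (m1 * cos a + m2 * sin a) ^ 2))
  (-2 * x0 * (p - k * m1))
  (-2 * v0 * (cos a * (p - k * m1) + sin a * (q - k * m2)))
  (p ^ 2 + q ^ 2 - k ^ 2)) as [hA [hC [hB [hD1 hD2]]]].
{ intros c s hcs.
  assert (hE : E x0 v0 a (x0 * c + v0 * cos a * s, v0 * sin a * s))
    by (apply E_unit_circle; now exists c, s).
  pose proof (dist2_sq (x0 * c + v0 * cos a * s, v0 * sin a * s) (p, q)) as hsq.
  rewrite E_focal_dist_affine in hsq by exact hE; cbn [fst snd] in hsq.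
  lra. }
assert (hp : p = k * m1).
{ assert (x0 * (p - k * m1) = 0) as e by lra.
  apply Rmult_integral in e; destruct e; lra. }
rewrite cos_sin_sq in hC.
repeat split; [exact hp | | lra | lra |].
- rewrite hp in hD2; assert (v0 * (sin a * (q - k * m2)) = 0) as e by lra.
  apply Rmult_integral in e; destruct e; lra.
- assert (x0 * v0 * (cos a * (1 - m1 ^ 2) - m1 * m2 * sin a) = 0) as e by lra.
  apply Rmult_integral in e; destruct e as [e | e]; [| lra].
  apply Rmult_integral in e; destruct e; lra.
Qed.

Lemma focus_components :
  p ^ 2 - q ^ 2 = x0 ^ 2 + v0 ^ 2 * cos (2 * a) /\ 2 * p * q = v0 ^ 2 * sin (2 * a).
Proof.
destruct focal_conic_coeffs as [hp [hq [h1 [h2 h3]]]].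
pose proof focal_dir_le as hm.
pose proof (cos_sin_sq a) as hcs.
rewrite cos_2a, sin_2a.
destruct (Req_dec (sin a) 0) as [hs | hs].
- (* a segment: its foci must be its endpoints (+-sqrt (x0^2 + v0^2), 0) *)
  rewrite hs in hcs, h3 |- *.
  assert (hc1 : cos a ^ 2 = 1) by (rewrite <- hcs; ring).
  assert (hm1 : m1 ^ 2 = 1).
  { rewrite Rmult_0_r in h3; apply Rmult_integral in h3; destruct h3; nra. }
  assert (hm2 : m2 = 0) by nra.
  assert (hq0 : q = 0) by (rewrite hp in h1; nra).
  set (r := sqrt (x0 ^ 2 + v0 ^ 2)).
  assert (hr : r ^ 2 = x0 ^ 2 + v0 ^ 2) by (apply pow2_sqrt; nra).
  assert (hr0 : 0 <= r) by apply sqrt_pos.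
  assert (hk : forall e, e ^ 2 = 1 -> 0 <= k - m1 * (e * r)).
  { intros e he; pose proof (E_segment_endpoint x0 v0 a e hx0 hs he) as hE; fold r in hE.
    pose proof (E_focal_dist_affine _ _ hE); pose proof (dist2_nonneg (e * r, 0) (p, q)).
    lra. }
  assert (hkr : r <= k).
  { pose proof (hk 1 ltac:(ring)); pose proof (hk (-1) ltac:(ring)).
    assert ((m1 - 1) * (m1 + 1) = 0) as e by nra.
    apply Rmult_integral in e; destruct e as [e | e];
      [replace m1 with 1 in * by lra | replace m1 with (-1) in * by lra]; lra. }
  (* the focus lies on the segment, since |F - F'| = d *)
  assert (hF : E x0 v0 a (p, q)).
  { apply hfocus; unfold dist2; cbn [fst snd].
    replace ((p - p) ^ 2 + (q - q) ^ 2) with 0 by ring; rewrite sqrt_0, Rplus_0_l.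
    pose proof focal_sum_pos as hd.
    replace ((p - p') ^ 2 + (q - q') ^ 2) with (d ^ 2).
    - apply sqrt_pow2; lra.
    - transitivity (d ^ 2 * (m1 ^ 2 + m2 ^ 2)); [rewrite hm1, hm2; ring |].
      unfold m1, m2; field; lra. }
  pose proof (E_segment_bound x0 v0 a p q hs hF) as hpr.
  replace (cos a * cos a) with 1 by (rewrite <- hc1; ring).
  rewrite hq0; split; [| ring].
  rewrite hp in *.
  replace ((k * m1) ^ 2) with (k ^ 2) in *
    by (transitivity (k ^ 2 * m1 ^ 2); [rewrite hm1 |]; ring).
  nra.
- assert (hq' : q = k * m2) by (apply Rmult_integral in hq; destruct hq; [lra | contradiction]).
  rewrite hp, hq' in h1, h2 |- *.
  destruct (foci_from_conjugate_diameters x0 v0 (cos a) (sin a) k m1 m2); auto; lra.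
Qed.

End Focus_of_E.

Lemma sq_of_focus (x0 v0 a : R) (F : C) : 0 < x0 -> 0 < v0 ->
  is_focus (E x0 v0 a) F -> (F * F = focus_sq x0 v0 a)%C.
Proof.
destruct F as [p q]; intros hx hv [[p' q'] [d hfocus]].
destruct (focus_components x0 v0 a p q p' q' d hx hv hfocus) as [e1 e2].
unfold focus_sq, expi; apply injective_projections; simpl; lra.
Qed.

Lemma foci_locus_cassini (x0 v0 : R) (P : R * R) : 0 < x0 -> 0 < v0 ->
  foci_locus x0 v0 P <-> cassini x0 v0 P.
Proof.
intros hx hv; split.
- intros [a [_ hF]]; apply (cassini_of_sq x0 v0 a), sq_of_focus; auto.
- intros hc; destruct (sq_of_cassini x0 v0 P hv hc) as [a [ha hF]].
  pose proof PI_RGT_0; exists a; split; [lra | now apply is_focus_of_sq].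
Qed.

Lemma cassini_cartesian (x0 v0 x y : R) : cassini x0 v0 (x, y) <->
  (x ^ 2 + y ^ 2) ^ 2 - 2 * x0 ^ 2 * (x ^ 2 - y ^ 2) = v0 ^ 4 - x0 ^ 4.
Proof.
unfold cassini; cbn [fst snd].
replace (((x + x0) ^ 2 + y ^ 2) * ((x - x0) ^ 2 + y ^ 2))
  with ((x ^ 2 + y ^ 2) ^ 2 - 2 * x0 ^ 2 * (x ^ 2 - y ^ 2) + x0 ^ 4) by ring.
split; intros; lra.
Qed.

Lemma cassini_polar (x0 v0 r t : R) : cassini x0 v0 (r * cos t, r * sin t) <->
  r ^ 4 - 2 * x0 ^ 2 * r ^ 2 * cos (2 * t) = v0 ^ 4 - x0 ^ 4.
Proof.
rewrite cassini_cartesian, cos_2a.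
replace ((r * cos t) ^ 2 + (r * sin t) ^ 2) with (r ^ 2) by
  (rewrite <- (Rmult_1_r (r ^ 2)), <- (cos_sin_sq t) at 1; ring).
replace ((r ^ 2) ^ 2) with (r ^ 4) by ring.
replace ((r * cos t) ^ 2 - (r * sin t) ^ 2) with (r ^ 2 * (cos t * cos t - sin t * sin t)) by ring.
split; intros h; rewrite <- h; ring.
Qed.

Lemma cassini_in_safety_ellipse (x0 v0 x y : R) : 0 < x0 -> 0 < v0 ->
  cassini x0 v0 (x, y) -> x ^ 2 / (x0 ^ 2 + v0 ^ 2) + y ^ 2 / v0 ^ 2 <= 1.
Proof.
intros hx hv hc; apply cassini_cartesian in hc.
assert (hX : 0 <= x ^ 2) by apply pow2_ge_0; assert (hY : 0 <= y ^ 2) by apply pow2_ge_0.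
assert (hK : 0 < x0 ^ 2) by nra; assert (hV : 0 < v0 ^ 2) by nra.
(* with u = x^2 + y^2, the oval reads (u - x0^2)^2 = v0^4 - 4 x0^2 y^2 *)
assert (hu : x ^ 2 + y ^ 2 <= x0 ^ 2 + v0 ^ 2).
{ assert ((x ^ 2 + y ^ 2 - x0 ^ 2) ^ 2 <= (v0 ^ 2) ^ 2) by nra. nra. }
assert (h : 0 <= v0 ^ 2 * (x0 ^ 2 + v0 ^ 2) - v0 ^ 2 * x ^ 2 - (x0 ^ 2 + v0 ^ 2) * y ^ 2).
{ assert (0 <= (x ^ 2 + y ^ 2 - x0 ^ 2 - 3 * v0 ^ 2) * (x ^ 2 + y ^ 2 - x0 ^ 2 - v0 ^ 2)) by nra.
  nra. }
apply Rmult_le_reg_r with (v0 ^ 2 * (x0 ^ 2 + v0 ^ 2)); [nra |].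
replace ((x ^ 2 / (x0 ^ 2 + v0 ^ 2) + y ^ 2 / v0 ^ 2) * (v0 ^ 2 * (x0 ^ 2 + v0 ^ 2)))
  with (v0 ^ 2 * x ^ 2 + (x0 ^ 2 + v0 ^ 2) * y ^ 2) by (field; lra).
lra.
Qed.

Lemma lemniscate_point_sq (x0 r a : R) : r ^ 2 = 2 * x0 ^ 2 * cos a ->
  Cmult (r * cos (a / 2), r * sin (a / 2)) (r * cos (a / 2), r * sin (a / 2))
  = focus_sq x0 x0 a.
Proof.
intros hr; unfold focus_sq, expi.
rewrite cos_2a_cos, sin_2a.
assert (ha : a = 2 * (a / 2)) by field.
apply injective_projections; simpl.
- transitivity (r ^ 2 * cos (2 * (a / 2))); [rewrite cos_2a; ring |].
  rewrite <- ha, hr; ring.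
- transitivity (r ^ 2 * sin (2 * (a / 2))); [rewrite sin_2a; ring |].
  rewrite <- ha, hr; ring.
Qed.

Lemma lemniscate_half_angle (x0 : R) (P : R * R) : 0 < x0 ->
  foci_locus x0 x0 P <->
  exists r a, - (PI / 2) <= a <= PI / 2 /\ r ^ 2 = 2 * x0 ^ 2 * cos a /\
              P = (r * cos (a / 2), r * sin (a / 2)).
Proof.
intros hx; pose proof PI_RGT_0; split.
- intros hP; apply foci_locus_cassini in hP; auto.
  destruct (sq_of_cassini x0 x0 P hx hP) as [a [ha hF]].
  assert (hr : sqrt (2 * x0 ^ 2 * cos a) ^ 2 = 2 * x0 ^ 2 * cos a).
  { apply pow2_sqrt; assert (0 <= cos a) by (apply cos_ge_0; lra); nra. }
  rewrite <- (lemniscate_point_sq x0 _ a hr) in hF.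
  destruct (Csqr_eq _ _ hF) as [-> | ->].
  + exists (sqrt (2 * x0 ^ 2 * cos a)), a; repeat split; auto; lra.
  + exists (- sqrt (2 * x0 ^ 2 * cos a)), a; repeat split; try lra.
    apply injective_projections; simpl; ring.
- intros [r [a [ha [hr ->]]]]; exists a; split; [lra |].
  now apply is_focus_of_sq, lemniscate_point_sq.
Qed.

Theorem mainTheorem1 (x0 v0 : R) (hx0 : 0 < x0) (hv0 : 0 < v0) :
  (forall P, foci_locus x0 v0 P <-> cassini x0 v0 P) /\
  (forall x y, cassini x0 v0 (x, y) <->
     (x ^ 2 + y ^ 2) ^ 2 - 2 * x0 ^ 2 * (x ^ 2 - y ^ 2) = v0 ^ 4 - x0 ^ 4) /\
  (forall r th, 0 <= r ->
     (cassini x0 v0 (r * cos th, r * sin th) <->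
      r ^ 4 - 2 * x0 ^ 2 * r ^ 2 * cos (2 * th) = v0 ^ 4 - x0 ^ 4)) /\
  (forall x y, cassini x0 v0 (x, y) ->
     x ^ 2 / (x0 ^ 2 + v0 ^ 2) + y ^ 2 / v0 ^ 2 <= 1) /\
  (forall x y, cassini x0 v0 (x, y) ->
     cassini x0 v0 (- x, y) /\ cassini x0 v0 (x, - y)) /\
  (x0 = v0 ->
     (forall x y, foci_locus x0 v0 (x, y) <->
        (x ^ 2 + y ^ 2) ^ 2 = 2 * x0 ^ 2 * (x ^ 2 - y ^ 2)) /\
     (forall P, foci_locus x0 v0 P <->
        exists r th, - (PI / 4) <= th <= PI / 4 /\
          r ^ 2 = 2 * x0 ^ 2 * cos (2 * th) /\ P = (r * cos th, r * sin th)) /\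
     (forall a, - (PI / 2) <= a <= PI / 2 ->
        is_focus (E x0 v0 a)
          (sqrt (2 * x0 ^ 2 * cos a) * cos (a / 2),
           sqrt (2 * x0 ^ 2 * cos a) * sin (a / 2))) /\
     (forall P, foci_locus x0 v0 P <->
        exists r a, - (PI / 2) <= a <= PI / 2 /\
          r ^ 2 = 2 * x0 ^ 2 * cos a /\ P = (r * cos (a / 2), r * sin (a / 2)))).
Proof.
split; [intros P; now apply foci_locus_cassini |].
split; [intros x y; apply cassini_cartesian |].
split; [intros r th _; apply cassini_polar |].
split; [intros x y; now apply cassini_in_safety_ellipse |].
split; [intros x y h; unfold cassini in *; cbn [fst snd] in *; split; rewrite <- h; ring |].
intros <-; split; [| split; [| split]].
- intros x y; rewrite foci_locus_cassini, cassini_cartesian by auto; split; intros; lra.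
- intros P; rewrite lemniscate_half_angle by auto; split.
  + intros [r [a [ha [hr ->]]]]; exists r, (a / 2).
    replace (2 * (a / 2)) with a by field; repeat split; auto; lra.
  + intros [r [th [hth [hr ->]]]]; exists r, (2 * th).
    replace (2 * th / 2) with th by field; repeat split; auto; lra.
- intros a ha; apply is_focus_of_sq, lemniscate_point_sq, pow2_sqrt.
  assert (0 <= cos a) by (apply cos_ge_0; lra); nra.
- intros P; now apply lemniscate_half_angle.
Qed.
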